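(* Let $n\geqslant 4$ and let $S$ be an independent set of vertices of the alternating group graph $AG_n$. (1) If $|S|=3$, then $|N(S)|\geqslant 6n-16$. (2) If $|S|=4$, then $|N(S)|\geqslant 8n-24$.
   Context: For $n\geqslant 3$, permutations $p=p_1\cdots p_n$ of $\{1,\dots,n\}$ are written as words; $\mathcal A_n$ is the set of even permutations. For $3\leqslant i\leqslant n$, $p\,\mathrm{g}_i^+$ is obtained from $p$ by placing $p_i,p_1,p_2$ at positions $1,2,i$ respectively (others unchanged), and $p\,\mathrm{g}_i^-$ by placing $p_2,p_i,p_1$ at positions $1,2,i$. $AG_n$ has vertex set $\mathcal A_n$, with $p,q$ adjacent iff $q\in\{p\mathrm{g}_i^+,p\mathrm{g}_i^-\}$ for some $i\in\{3,\dots,n\}$. For a vertex set $S$, $N(S)$ is the set of vertices not in $S$ adjacent to at least one vertex of $S$. *)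

From mathcomp Require Import all_boot all_fingroup.
Set Implicit Arguments. Unset Strict Implicit. Unset Printing Implicit Defensive.

(* A permutation p of {0,...,n-1} (relabelling of {1,...,n}) is read as the
   word p(0) p(1) ... p(n-1); position a has value 0, b value 1 and
   k value i-1 (so 2 <= k <= n-1, i.e. 3 <= i <= n). *)

Definition gplus n (p : {perm 'I_n}) (a b k j : 'I_n) : 'I_n :=
  if j == a then p k else if j == b then p a else if j == k then p b else p j.

Definition gminus n (p : {perm 'I_n}) (a b k j : 'I_n) : 'I_n :=
  if j == a then p b else if j == b then p k else if j == k then p a else p j.

Definition AGadj n (p q : {perm 'I_n}) : bool :=
  [exists k : 'I_n, exists a : 'I_n, exists b : 'I_n,
    [&& val a == 0, val b == 1, 2 <= val k &
       [forall j, q j == gplus p a b k j] || [forall j, q j == gminus p a b k j]]].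

Definition AGvert n : {set {perm 'I_n}} := [set p : {perm 'I_n} | ~~ odd_perm p].

Definition AGindependent n (S : {set {perm 'I_n}}) : bool :=
  (S \subset AGvert n) && [forall p in S, forall q in S, ~~ AGadj p q].

Definition AGnbhd n (S : {set {perm 'I_n}}) : {set {perm 'I_n}} :=
  [set q in AGvert n | (q \notin S) && [exists p in S, AGadj p q]].

(* Fix the positions a, b (the paper's 1, 2).  The neighbours of v are the
   2(n-2) words obtained by cyclically rotating the letters at a, b and one
   further position m.  If x is a common neighbour of two distinct
   non-adjacent v, w, rotated at m from v and at m' from w, then m <> m',
   v and w agree outside {a, b, m, m'}, and x is determined by m; hence v and
   w have at most two common neighbours, and when they have two, w is v with
   the letters v(a), v(b) moved to two positions k, l.  Comparing these
   positions shows: if v has two common neighbours with each of u and w, then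
   every common neighbour of u and w is a neighbour of v.  So the pairwise
   overlaps of N(u), N(v), N(w) add up to at most 4 + |N(u) ∩ N(v) ∩ N(w)|,
   and inclusion-exclusion gives |N(u) ∪ N(v) ∪ N(w)| >= 6(n-2) - 4.  For four
   vertices, a point lying in exactly j >= 1 of the four neighbourhoods lies in
   the union of the other three for at most j + 2 of the four vertices, so
   summing the triple bound gives 4(6(n-2) - 4) <= 4 * 2(n-2) + 2|N(S)|. *)

From mathcomp Require Import all_boot all_fingroup zify.

Set Implicit Arguments. Unset Strict Implicit. Unset Printing Implicit Defensive.

Lemma three_pairs_bound (p q r t : nat) : p <= 2 -> q <= 2 -> r <= 2 ->
  (1 < p -> 1 < q -> r <= t) -> (1 < p -> 1 < r -> q <= t) ->
  (1 < q -> 1 < r -> p <= t) -> p + q + r <= 4 + t.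
Proof. lia. Qed.

Lemma card_sum_in (T : finType) (A : {set T}) : #|A| = \sum_x (x \in A : nat).
Proof. by rewrite -sum1_card big_mkcond; apply: eq_bigr => x _; case: (x \in A). Qed.

Section Counting.

Variable T : finType.
Implicit Types A B C : {set T}.

Lemma cardsU3 A B C :
  #|A :|: B :|: C| + #|A :&: B| + #|A :&: C| + #|B :&: C| =
  #|A| + #|B| + #|C| + #|A :&: B :&: C|.
Proof.
rewrite !card_sum_in -!big_split; apply: eq_bigr => x _; rewrite !inE.
by case: (x \in A); case: (x \in B); case: (x \in C).
Qed.

Lemma card_setI_le3 A B C : B :&: C \subset A -> #|B :&: C| <= #|A :&: B :&: C|.
Proof. by move=> sub; rewrite -setIA (setIidPr sub). Qed.

Lemma sum_card_bigcup_setD1 (I : finType) (S : {set I}) (F : I -> {set T}) :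
  \sum_(i in S) #|\bigcup_(j in S :\ i) F j| <=
  \sum_(i in S) #|F i| + (#|S| - 2) * #|\bigcup_(i in S) F i|.
Proof.
have sum_card (G : I -> {set T}) :
    \sum_(i in S) #|G i| = \sum_x \sum_(i in S) (x \in G i : nat).
  by under eq_bigr do rewrite card_sum_in; exact: exchange_big.
set k := #|S|; rewrite !sum_card (card_sum_in (\bigcup_(i in S) F i)).
rewrite big_distrr -big_split /=; apply: leq_sum => x _.
set K := [set i in S | x \in F i].
have -> : \sum_(i in S) (x \in F i : nat) = #|K|.
  by rewrite card_sum_in big_mkcond; apply: eq_bigr => i _; rewrite inE; case: (i \in S).
have [/eqP|] := posnP #|K|.
  rewrite cards_eq0 => /eqP K0; rewrite big1 // => i _.
  case: bigcupP => // -[j /setD1P[_ jS] xj].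
  by have := in_set0 j; rewrite -K0 inE jS xj.
case/card_gt0P => i0; rewrite inE => /andP[i0S xi0].
have xU : x \in \bigcup_(i in S) F i by apply/bigcupP; exists i0.
have i0_term : (x \in \bigcup_(j in S :\ i0) F j : nat) <= #|K| - 1.
  case: bigcupP => // -[j /setD1P[ji0 jS] xj]; rewrite subn_gt0.
  by apply/card_gt1P; exists j, i0; rewrite !inE jS xj i0S xi0.
have rest : \sum_(i in S :\ i0) (x \in \bigcup_(j in S :\ i) F j : nat) <= #|S :\ i0|.
  by rewrite -sum1_card; apply: leq_sum => i _; exact: leq_b1.
have k_i0 : k = #|S :\ i0|.+1 by rewrite /k (cardsD1 i0) i0S.
have K_pos : 0 < #|K| by apply/card_gt0P; exists i0; rewrite inE i0S xi0.
rewrite (big_setD1 i0) // xU muln1 /=; lia.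
Qed.

End Counting.

Section RotationGraph.

Variables (T : finType) (a b : T).
Hypothesis neq_ab : a != b.

Definition outer : {set T} := ~: [set a; b].

Lemma outerE m : (m \in outer) = (m != a) && (m != b).
Proof. by rewrite !inE negb_or. Qed.

(* Products compose left to right, so [(gp m * v) j = v (gp m j)]: the
   permutation [gp m * v] is the word v g^+ of the paper, rotated at m. *)
Definition gp (m : T) : {perm T} := (tperm b m * tperm a m)%g.
Definition gm (m : T) : {perm T} := (tperm a m * tperm b m)%g.

Lemma gpV m : (gp m)^-1%g = gm m.
Proof. by rewrite invMg !tpermV. Qed.

Section Generators.

Variable m : T.
Hypothesis m_outer : m \in outer.

Let neq_ma : m != a. Proof. by move: m_outer; rewrite outerE => /andP[]. Qed.
Let neq_mb : m != b. Proof. by move: m_outer; rewrite outerE => /andP[]. Qed.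
Let neq_ba : b != a. Proof. by rewrite eq_sym. Qed.
Let neq_am : a != m. Proof. by rewrite eq_sym. Qed.
Let neq_bm : b != m. Proof. by rewrite eq_sym. Qed.

Lemma gp_a : gp m a = m.
Proof. by rewrite permM (tpermD neq_ba neq_ma) tpermL. Qed.
Lemma gp_b : gp m b = a.
Proof. by rewrite permM tpermL tpermR. Qed.
Lemma gp_m : gp m m = b.
Proof. by rewrite permM tpermR (tpermD neq_ab neq_mb). Qed.
Lemma gp_id j : j != a -> j != b -> j != m -> gp m j = j.
Proof. by move=> ja jb jm; rewrite permM !tpermD // eq_sym. Qed.

Lemma gm_a : gm m a = b.
Proof. by rewrite permM tpermL tpermR. Qed.
Lemma gm_b : gm m b = m.
Proof. by rewrite permM (tpermD neq_ab neq_mb) tpermL. Qed.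
Lemma gm_m : gm m m = a.
Proof. by rewrite permM tpermR (tpermD neq_ba neq_ma). Qed.
Lemma gm_id j : j != a -> j != b -> j != m -> gm m j = j.
Proof. by move=> ja jb jm; rewrite permM !tpermD // eq_sym. Qed.

Lemma gp_sqr : (gp m * gp m)%g = gm m.
Proof.
apply/permP => j; rewrite permM.
have [->|ja] := eqVneq j a; first by rewrite gp_a gp_m gm_a.
have [->|jb] := eqVneq j b; first by rewrite gp_b gp_a gm_b.
have [->|jm] := eqVneq j m; first by rewrite gp_m gp_b gm_m.
by rewrite !gp_id ?gm_id.
Qed.

Lemma gm_sqr : (gm m * gm m)%g = gp m.
Proof. by rewrite -{1}gp_sqr -mulgA -gpV mulgV mulg1. Qed.

Lemma odd_gp : odd_perm (gp m) = false.
Proof. by rewrite odd_permM !odd_tperm neq_am neq_bm. Qed.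

Lemma odd_gm : odd_perm (gm m) = false.
Proof. by rewrite -gpV odd_permV odd_gp. Qed.

End Generators.

Definition nbr_at (v x : {perm T}) (m : T) : Prop :=
  m \in outer /\ (x = (gp m * v)%g \/ x = (gm m * v)%g).

Definition nbr (v : {perm T}) : {set {perm T}} :=
  [set (gp m * v)%g | m in outer] :|: [set (gm m * v)%g | m in outer].

Lemma nbrP v x : reflect (exists m, nbr_at v x m) (x \in nbr v).
Proof.
apply: (iffP setUP) => [[]/imsetP[m m_out ->]|[m [m_out [->|->]]]].
- by exists m; split; [|left].
- by exists m; split; [|right].
- by left; apply: imset_f.
- by right; apply: imset_f.
Qed.

Lemma card_outer : #|outer| = #|T| - 2.
Proof. by rewrite cardsCs setCK cards2 neq_ab. Qed.

Lemma card_nbr v : #|nbr v| = 2 * (#|T| - 2).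
Proof.
have disj : [set (gp m * v)%g | m in outer] :&: [set (gm m * v)%g | m in outer] = set0.
  apply/setP => x; rewrite !inE; apply/andP => -[/imsetP[m m_out ->]].
  case/imsetP => m' m'_out /mulIg E.
  have : gp m a = gm m' a by rewrite E.
  rewrite gp_a // gm_a // => eq_mb.
  by move: m_out; rewrite outerE eq_mb eqxx andbF.
rewrite cardsU disj cards0 subn0 !card_in_imset ?card_outer ?addnn ?mul2n //.
- move=> m m' m_out m'_out /mulIg/(congr1 (fun g : {perm T} => g b)).
  by rewrite !gm_b.
- move=> m m' m_out m'_out /mulIg/(congr1 (fun g : {perm T} => g a)).
  by rewrite !gp_a.
Qed.

Lemma nbr_sym v w : (w \in nbr v) = (v \in nbr w).
Proof.
suff nbrI x y : x \in nbr y -> y \in nbr x by apply/idP/idP; apply: nbrI.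
case/nbrP => m [m_out [->|->]]; apply/nbrP; exists m; split=> //.
  by right; rewrite mulgA -gpV mulVg mul1g.
by left; rewrite mulgA -gpV mulgV mul1g.
Qed.

Lemma odd_perm_nbr v x : x \in nbr v -> odd_perm x = odd_perm v.
Proof.
by case/nbrP => m [m_out [->|->]]; rewrite odd_permM ?odd_gp ?odd_gm.
Qed.

Lemma nbr_at_off v x m j : nbr_at v x m -> j != a -> j != b -> j != m -> x j = v j.
Proof. by case=> m_out [->|->] ja jb jm; rewrite permM ?gp_id ?gm_id. Qed.

Lemma nbr_at_val v x m : nbr_at v x m -> x m = v b \/ x m = v a.
Proof. by case=> m_out [->|->]; [left|right]; rewrite permM ?gp_m ?gm_m. Qed.

Lemma nbr_at_src v x m : nbr_at v x m -> v m = x a \/ v m = x b.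
Proof. by case=> m_out [->|->]; [left|right]; rewrite permM ?gp_a ?gm_b. Qed.

Lemma nbr_at_gp v x m : nbr_at v x m -> x m = v b -> x = (gp m * v)%g.
Proof.
case=> m_out [->|->] //; rewrite permM gm_m // => /perm_inj eq_ab.
by move: neq_ab; rewrite eq_ab eqxx.
Qed.

Lemma nbr_at_gm v x m : nbr_at v x m -> x m = v a -> x = (gm m * v)%g.
Proof.
case=> m_out [->|->] //; rewrite permM gp_m // => /perm_inj eq_ba.
by move: neq_ab; rewrite eq_ba eqxx.
Qed.

Lemma nbr_at_inj v x y m : nbr_at v x m -> nbr_at v y m -> x m = y m -> x = y.
Proof.
move=> xv yv xy; case: (nbr_at_val xv) => xm.
  by rewrite (nbr_at_gp xv xm) (nbr_at_gp yv) // -xy.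
by rewrite (nbr_at_gm xv xm) (nbr_at_gm yv) // -xy.
Qed.

Lemma nbr_at_common v w x m : nbr_at v x m -> nbr_at w x m -> v = w \/ nbr_at v w m.
Proof.
case=> m_out [->|->] [_ [E|E]]; try by left; apply: mulgI E.
- have -> : w = (gp m * gp m * v)%g by rewrite -mulgA E mulgA -gpV mulgV mul1g.
  by rewrite gp_sqr //; right; split=> //; right.
- have -> : w = (gm m * gm m * v)%g by rewrite -mulgA E mulgA -gpV mulVg mul1g.
  by rewrite gm_sqr //; right; split=> //; left.
Qed.

Lemma nbr_at_letter u w x m m' p p' : nbr_at u x m -> nbr_at w x m' ->
  p \in outer -> p' \in outer -> p != p' -> u p = w p' -> m = p.
Proof.
move=> xu xw; rewrite !outerE => /andP[pa pb] /andP[p'a p'b] pp' up.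
apply/eqP; apply: contraT => mp.
have xp : x p = w p' by rewrite (nbr_at_off xu) // eq_sym.
have [eq_m'p'|m'p'] := eqVneq m' p'.
  rewrite -eq_m'p' in xp; have [] := nbr_at_src xw; rewrite -xp => /perm_inj eq_p.
    by rewrite eq_p eqxx in pa.
  by rewrite eq_p eqxx in pb.
have xp' : x p' = w p' by rewrite (nbr_at_off xw) // eq_sym.
by move: pp'; rewrite -xp' in xp; rewrite (perm_inj xp) eqxx.
Qed.

Section CommonNeighbours.

Variables v w : {perm T}.
Hypotheses (neq_vw : v != w) (w_notin_nbr : w \notin nbr v).

Lemma common_nbrP x :
  reflect (exists m m', nbr_at v x m /\ nbr_at w x m') (x \in nbr v :&: nbr w).
Proof.
apply: (iffP setIP) => [[/nbrP[m xv] /nbrP[m' xw]]|[m [m' [xv xw]]]].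
  by exists m, m'.
by split; apply/nbrP; [exists m | exists m'].
Qed.

Lemma common_nbr_shape x m m' : nbr_at v x m -> nbr_at w x m' ->
  [/\ m != m', v m != w m, w m = x m &
      forall j, j != a -> j != b -> j != m -> j != m' -> v j = w j].
Proof.
move=> xv xw; have [m_out _] := xv; have [m'_out _] := xw.
move: (m_out) (m'_out); rewrite !outerE => /andP[ma mb] /andP[m'a m'b].
have mm' : m != m'.
  apply/eqP => eq_mm'; rewrite -eq_mm' in xw.
  have [eq_vw|wv] := nbr_at_common xv xw; first by move: neq_vw; rewrite eq_vw eqxx.
  by case/nbrP: w_notin_nbr; exists m.
have wm : w m = x m by rewrite (nbr_at_off xw).
split=> // [|j ja jb jm jm']; last by rewrite -(nbr_at_off xv) // (nbr_at_off xw).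
by rewrite wm; case: (nbr_at_val xv) => ->; rewrite (inj_eq perm_inj).
Qed.

Lemma common_nbr_inj x y m mx my : nbr_at v x m -> nbr_at w x mx ->
  nbr_at v y m -> nbr_at w y my -> x = y.
Proof.
move=> xv xw yv yw; apply: (nbr_at_inj xv yv).
by have [_ _ <- _] := common_nbr_shape xv xw; have [_ _ <- _] := common_nbr_shape yv yw.
Qed.

Lemma common_nbr_pos x0 m0 m0' x m m' : nbr_at v x0 m0 -> nbr_at w x0 m0' ->
  nbr_at v x m -> nbr_at w x m' -> m = m0 \/ m = m0'.
Proof.
move=> x0v x0w xv xw; have [_ vw _ _] := common_nbr_shape xv xw.
have [_ _ _ agree] := common_nbr_shape x0v x0w.
have [m_out _] := xv; move: m_out; rewrite outerE => /andP[ma mb].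
have [|mm0] := eqVneq m m0; first by left.
have [|mm0'] := eqVneq m m0'; first by right.
by rewrite agree ?eqxx in vw.
Qed.

Lemma card_common_nbr_le2 : #|nbr v :&: nbr w| <= 2.
Proof.
rewrite leqNgt; apply/negP => /card_gt2P[x [y [z [[xC yC zC] [xy yz zx]]]]].
have [mx [mx' [xv xw]]] := common_nbrP _ xC.
have [my [my' [yv yw]]] := common_nbrP _ yC.
have [mz [mz' [zv zw]]] := common_nbrP _ zC.
have [eq_my|eq_my] := common_nbr_pos xv xw yv yw.
  by rewrite eq_my in yv; rewrite (common_nbr_inj xv xw yv yw) eqxx in xy.
have [eq_mz|eq_mz] := common_nbr_pos xv xw zv zw.
  by rewrite eq_mz in zv; rewrite (common_nbr_inj xv xw zv zw) eqxx in zx.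
rewrite eq_my -eq_mz in yv.
by rewrite (common_nbr_inj yv yw zv zw) eqxx in yz.
Qed.

Lemma card_common_nbr_le1 p p' : p \in outer -> p' \in outer -> p != p' ->
  v p = w p' -> #|nbr v :&: nbr w| <= 1.
Proof.
move=> p_out p'_out pp' vp; apply/card_le1_eqP => x y.
case/common_nbrP => [mx [mx' [xv xw]]] /common_nbrP[my [my' [yv yw]]].
have eq_mx := nbr_at_letter xv xw p_out p'_out pp' vp.
have eq_my := nbr_at_letter yv yw p_out p'_out pp' vp.
rewrite eq_mx in xv; rewrite eq_my in yv.
exact: (common_nbr_inj yv yw xv xw).
Qed.

Lemma common_nbr_eq0 : {in outer, v =1 w} -> nbr v :&: nbr w = set0.
Proof.
move=> agree; apply/setP => x; rewrite in_set0; apply/negP.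
case/common_nbrP => [m [m' [xv xw]]]; have [_ vw _ _] := common_nbr_shape xv xw.
by have [m_out _] := xv; rewrite agree ?eqxx in vw.
Qed.

Lemma two_common_nbrs : 1 < #|nbr v :&: nbr w| ->
  exists k l, [/\ k \in outer, l \in outer, w k = v a & w l = v b] /\
    [/\ (gm k * v)%g \in nbr w, (gp l * v)%g \in nbr w &
        forall j, j \in outer -> j != k -> j != l -> w j = v j].
Proof.
case/card_gt1P => [x [y [xC yC xy]]].
have [mx [mx' [xv xw]]] := common_nbrP _ xC.
have [my [my' [yv yw]]] := common_nbrP _ yC.
have [eq_my|eq_my] := common_nbr_pos xv xw yv yw.
  by rewrite eq_my in yv; rewrite (common_nbr_inj xv xw yv yw) eqxx in xy.
rewrite eq_my in yv.
have [mm' _ wx agree] := common_nbr_shape xv xw.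
have [_ _ wy _] := common_nbr_shape yv yw.
have agree' j : j \in outer -> j != mx -> j != mx' -> w j = v j.
  by rewrite outerE => /andP[ja jb] jmx jmx'; rewrite agree.
have [x_w y_w] : x \in nbr w /\ y \in nbr w by case/setIP: xC; case/setIP: yC.
case: (nbr_at_val xv) => xm; case: (nbr_at_val yv) => ym.
- by move: mm'; rewrite -(inj_eq (@perm_inj _ w)) wx wy xm ym eqxx.
- exists mx', mx; split; first by split; rewrite ?wx ?wy //; case: xv; case: yv.
  rewrite -(nbr_at_gm yv ym) -(nbr_at_gp xv xm); split=> // j jo jk jl.
  exact: agree'.
- exists mx, mx'; split; first by split; rewrite ?wx ?wy //; case: xv; case: yv.
  by rewrite -(nbr_at_gm xv xm) -(nbr_at_gp yv ym).
- by move: mm'; rewrite -(inj_eq (@perm_inj _ w)) wx wy xm ym eqxx.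
Qed.

End CommonNeighbours.

Lemma common_nbr_subset u v w : v != u -> v != w -> u != w ->
  u \notin nbr v -> w \notin nbr v -> w \notin nbr u ->
  1 < #|nbr v :&: nbr u| -> 1 < #|nbr v :&: nbr w| ->
  nbr u :&: nbr w \subset nbr v.
Proof.
move=> vu vw uw u_v w_v w_u.
case/(two_common_nbrs vu u_v) => [ku [lu [[ku_out lu_out uk ul] [gmk_u gpl_u agree_u]]]].
case/(two_common_nbrs vw w_v) => [kw [lw [[kw_out lw_out wk wl] [gmk_w gpl_w agree_w]]]].
have le1 : #|nbr u :&: nbr w| <= 1.
  have [ek|nk] := eqVneq ku kw; last first.
    by apply: (card_common_nbr_le1 uw w_u ku_out kw_out nk); rewrite uk wk.
  have [el|nl] := eqVneq lu lw; last first.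
    by apply: (card_common_nbr_le1 uw w_u lu_out lw_out nl); rewrite ul wl.
  rewrite common_nbr_eq0 ?cards0 // => j j_out.
  have [->|jk] := eqVneq j ku; first by rewrite uk ek wk.
  have [->|jl] := eqVneq j lu; first by rewrite ul el wl.
  by rewrite agree_u // agree_w // -?ek -?el.
have sub_nbr_v y : y \in nbr u :&: nbr w -> y \in nbr v ->
    nbr u :&: nbr w \subset nbr v.
  by move=> yC yv; apply/subsetP => x xC; move/card_le1_eqP: le1 => /(_ y x yC xC) ->.
have [ek|nk] := eqVneq ku kw.
  apply: (sub_nbr_v (gm ku * v)%g); first by rewrite inE gmk_u ek gmk_w.
  by apply/nbrP; exists ku; split=> //; right.
have [el|nl] := eqVneq lu lw.
  apply: (sub_nbr_v (gp lu * v)%g); first by rewrite inE gpl_u el gpl_w.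
  by apply/nbrP; exists lu; split=> //; left.
apply/subsetP => x /common_nbrP[m [m' [xu xw]]].
have mk : m = ku by apply: (nbr_at_letter xu xw ku_out kw_out nk); rewrite uk wk.
have ml : m = lu by apply: (nbr_at_letter xu xw lu_out lw_out nl); rewrite ul wl.
by move: neq_ab; rewrite -(inj_eq (@perm_inj _ v)) -uk -ul -mk -ml eqxx.
Qed.

Lemma card_nbr_setU3 x y z : x != y -> x != z -> y != z ->
  y \notin nbr x -> z \notin nbr x -> z \notin nbr y ->
  #|nbr x| + #|nbr y| + #|nbr z| <= #|nbr x :|: nbr y :|: nbr z| + 4.
Proof.
move=> xy xz yz y_x z_x z_y.
have [yx zx zy] : [/\ y != x, z != x & z != y] by split; rewrite eq_sym.
have [x_y x_z y_z] : [/\ x \notin nbr y, x \notin nbr z & y \notin nbr z].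
  by split; rewrite nbr_sym.
have pivot_x : 1 < #|nbr x :&: nbr y| -> 1 < #|nbr x :&: nbr z| ->
    #|nbr y :&: nbr z| <= #|nbr x :&: nbr y :&: nbr z|.
  by move=> cxy cxz; apply/card_setI_le3/(common_nbr_subset xy xz yz y_x z_x z_y cxy cxz).
have pivot_y : 1 < #|nbr x :&: nbr y| -> 1 < #|nbr y :&: nbr z| ->
    #|nbr x :&: nbr z| <= #|nbr x :&: nbr y :&: nbr z|.
  rewrite [nbr x :&: nbr y]setIC => cyx cyz.
  exact/card_setI_le3/(common_nbr_subset yx yz xz x_y z_y z_x cyx cyz).
have pivot_z : 1 < #|nbr x :&: nbr z| -> 1 < #|nbr y :&: nbr z| ->
    #|nbr x :&: nbr y| <= #|nbr x :&: nbr y :&: nbr z|.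
  rewrite [nbr x :&: nbr y :&: nbr z]setIC setIA => cxz cyz.
  rewrite setIC in cxz; rewrite setIC in cyz.
  exact/card_setI_le3/(common_nbr_subset zx zy xy x_z y_z y_x cxz cyz).
move: (cardsU3 (nbr x) (nbr y) (nbr z)).
move: (three_pairs_bound (card_common_nbr_le2 xy y_x) (card_common_nbr_le2 xz z_x)
  (card_common_nbr_le2 yz z_y) pivot_x pivot_y pivot_z).
clear; lia.
Qed.

Definition independent (S : {set {perm T}}) := {in S &, forall v w, w \notin nbr v}.

Lemma card_bigcup_nbr3 S : independent S -> #|S| = 3 ->
  6 * #|T| - 16 <= #|\bigcup_(v in S) nbr v|.
Proof.
case: cards_eqP => s s_uniq indS.
case: s s_uniq indS => [|x [|y [|z []]]] // s_uniq indS _.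
move: s_uniq; rewrite /= !inE !negb_or andbT => /andP[/andP[xy xz] yz].
have xS : x \in [set u in [:: x; y; z]] by rewrite !inE eqxx.
have yS : y \in [set u in [:: x; y; z]] by rewrite !inE eqxx orbT.
have zS : z \in [set u in [:: x; y; z]] by rewrite !inE eqxx !orbT.
rewrite big_set -bigcup_seq !big_cons big_nil setU0 setUA.
have := card_nbr_setU3 xy xz yz (indS _ _ xS yS) (indS _ _ xS zS) (indS _ _ yS zS).
rewrite !card_nbr; set k := #|T|; set U := #|nbr x :|: nbr y :|: nbr z|; lia.
Qed.

Lemma card_bigcup_nbr4 S : independent S -> #|S| = 4 ->
  8 * #|T| - 24 <= #|\bigcup_(v in S) nbr v|.
Proof.
move=> indS cardS.
have triple_bound v : v \in S -> 6 * #|T| - 16 <= #|\bigcup_(u in S :\ v) nbr u|.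
  move=> vS; apply: card_bigcup_nbr3.
    by move=> u w /setD1P[_ uS] /setD1P[_ wS]; apply: indS.
  by move: cardS; rewrite (cardsD1 v) vS => -[].
have : \sum_(v in S) (6 * #|T| - 16) <= \sum_(v in S) #|\bigcup_(u in S :\ v) nbr u|.
  exact: leq_sum.
have sum_nbr : \sum_(v in S) #|nbr v| = \sum_(v in S) 2 * (#|T| - 2).
  by apply: eq_bigr => v _; apply: card_nbr.
have := sum_card_bigcup_setD1 S nbr; rewrite sum_nbr.
rewrite !sum_nat_const cardS; set k := #|T|; set U := #|\bigcup_(v in S) nbr v|; lia.
Qed.

End RotationGraph.

Section AlternatingGroupGraph.

Variables (n : nat) (a0 b0 : 'I_n).
Hypotheses (a0E : val a0 = 0) (b0E : val b0 = 1).
Implicit Types S : {set {perm 'I_n}}.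

Let neq_a0b0 : a0 != b0. Proof. by rewrite -val_eqE a0E b0E. Qed.

Lemma outer_ord k : (k \in outer a0 b0) = (2 <= k).
Proof. by rewrite outerE -!val_eqE a0E b0E; case: k => -[|[]]. Qed.

Lemma gplusE p (k j : 'I_n) : 2 <= k -> gplus p a0 b0 k j = (gp a0 b0 k * p)%g j.
Proof.
rewrite -outer_ord => k_out; rewrite permM /gplus.
have [->|ja] := eqVneq j a0; first by rewrite gp_a.
have [->|jb] := eqVneq j b0; first by rewrite gp_b.
have [->|jk] := eqVneq j k; first by rewrite gp_m.
by rewrite gp_id.
Qed.

Lemma gminusE p (k j : 'I_n) : 2 <= k -> gminus p a0 b0 k j = (gm a0 b0 k * p)%g j.
Proof.
rewrite -outer_ord => k_out; rewrite permM /gminus.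
have [->|ja] := eqVneq j a0; first by rewrite gm_a.
have [->|jb] := eqVneq j b0; first by rewrite gm_b.
have [->|jk] := eqVneq j k; first by rewrite gm_m.
by rewrite gm_id.
Qed.

Lemma AGadjE p q : AGadj p q = (q \in nbr a0 b0 p).
Proof.
apply/idP/nbrP => [|[k [k_out qE]]].
  case/existsP => k /existsP[a /existsP[b /and4P[/eqP aE /eqP bE k2 gq]]].
  have eq_a : a = a0 by apply: val_inj; rewrite /= aE a0E.
  have eq_b : b = b0 by apply: val_inj; rewrite /= bE b0E.
  subst a b; exists k; split; first by rewrite outer_ord.
  case/orP: gq => /forallP gq; [left|right]; apply/permP => j;
    by rewrite (eqP (gq j)) ?gplusE ?gminusE.
apply/existsP; exists k; apply/existsP; exists a0; apply/existsP; exists b0.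
rewrite a0E b0E -outer_ord k_out /=.
by case: qE => ->; apply/orP; [left|right]; apply/forallP => j;
  rewrite ?gplusE ?gminusE -?outer_ord.
Qed.

Lemma independent_AG S : AGindependent S -> independent a0 b0 S.
Proof.
case/andP => _ /forallP indS p q pS qS; rewrite -AGadjE.
by move/implyP: (indS p) => /(_ pS)/forallP/(_ q)/implyP/(_ qS).
Qed.

Lemma AGnbhdE S :
  AGindependent S -> AGnbhd S = \bigcup_(v in S) nbr a0 b0 v.
Proof.
move=> indS; have indep := independent_AG indS.
case/andP: indS => /subsetP S_even _.
apply/setP => q; rewrite inE; apply/idP/bigcupP.
  by case/and3P => _ _ /existsP[p /andP[pS]]; rewrite AGadjE => qp; exists p.
case=> p pS qp; apply/and3P; split.
- by rewrite inE (odd_perm_nbr qp); have := S_even p pS; rewrite inE.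
- by apply: contraL qp => qS; apply: indep.
- by apply/existsP; exists p; rewrite pS AGadjE.
Qed.

Lemma card_AGnbhd3 S :
  AGindependent S -> #|S| = 3 -> 6 * n - 16 <= #|AGnbhd S|.
Proof.
move=> indS cardS; have := card_bigcup_nbr3 neq_a0b0 (independent_AG indS) cardS.
by rewrite card_ord AGnbhdE.
Qed.

Lemma card_AGnbhd4 S :
  AGindependent S -> #|S| = 4 -> 8 * n - 24 <= #|AGnbhd S|.
Proof.
move=> indS cardS; have := card_bigcup_nbr4 neq_a0b0 (independent_AG indS) cardS.
by rewrite card_ord AGnbhdE.
Qed.

End AlternatingGroupGraph.

Theorem lemma6 (n : nat) (S : {set {perm 'I_n}}) :
  4 <= n -> AGindependent S ->
  (#|S| = 3 -> 6 * n - 16 <= #|AGnbhd S|) /\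
  (#|S| = 4 -> 8 * n - 24 <= #|AGnbhd S|).
Proof.
move=> n_ge4 indS.
have n_gt0 : 0 < n by apply: leq_trans n_ge4.
have n_gt1 : 1 < n by apply: leq_trans n_ge4.
have a0E : val (Ordinal n_gt0) = 0 by [].
have b0E : val (Ordinal n_gt1) = 1 by [].
by split; [apply: (card_AGnbhd3 a0E b0E) | apply: (card_AGnbhd4 a0E b0E)].
Qed.
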